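(* Let $F:\mathbb{R}\to\mathbb{R}$ be a Darboux function. Then there is a continuous function $g:\mathbb{R}\to\mathbb{R}$ which is not constant such that $F+g$ is a Darboux function.
   Context: A function $F:\mathbb{R}\to\mathbb{R}$ is Darboux if it maps every connected set to a connected set; equivalently, the image under $F$ of every interval is an interval. *)

From Stdlib Require Import Reals.
Open Scope R_scope.

Definition is_interval (S : R -> Prop) : Prop :=
  forall x y z : R, S x -> S y -> x <= z <= y -> S z.

Definition image (F : R -> R) (S : R -> Prop) : R -> Prop :=
  fun y => exists x, S x /\ F x = y.

Definition Darboux (F : R -> R) : Prop :=
  forall I : R -> Prop, is_interval I -> is_interval (image F I).

From Stdlib Require Import Reals Lra Lia List Classical ClassicalEpsilon.
Open Scope R_scope.

(* Replace [F] by the bounded Darboux function [phi = atan o F].  Either [phi] oscillates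
   densely on some interval (every subinterval contains values below [w1] and above [w2]),
   or every interval contains subintervals on which [phi] oscillates as little as we like.
   In both cases we build a Cantor set [C] by repeatedly splitting intervals into two
   shorter ones separated by a gap, and take for [g] a multiple of the Cantor function of
   [C]: it is continuous, nonconstant and constant on every gap, so [F + g] has the
   intermediate value property on the gaps.
   - In the calm case the pieces have small [phi]-oscillation, so [F + g] is continuous
     on [C], and a connectedness argument gives the intermediate value property.
   - In the oscillating case each gap contains points where [phi] is almost minimal and
     almost maximal on the parent interval.  So every point [x] of [C] is either isolated
     in [C] from one side or approached from that side by gap points where [F + g] is not
     much above, resp. not much below, its value at [x]; and on every gap near [C] the
     function [F + g] goes below [tan w1 + theta] and above [tan w2].  Together with the
     intermediate value property on the gaps, this reaches every intermediate value. *)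

Lemma half_pow_pos (n : nat) : 0 < (/ 2) ^ n.
Proof. apply pow_lt; lra. Qed.

Lemma half_pow_le (n m : nat) : (n <= m)%nat -> (/ 2) ^ m <= (/ 2) ^ n.
Proof.
  induction 1 as [|m _ IH]; [lra|].
  assert (Hm := half_pow_pos m); simpl; lra.
Qed.

Lemma half_pow_small (c e : R) : 0 < e -> exists n, c * (/ 2) ^ n < e.
Proof.
  intros He; destruct (Rle_lt_dec c 0) as [Hc|Hc].
  - exists O; simpl; lra.
  - assert (Hec : 0 < e / c) by (apply Rdiv_lt_0_compat; lra).
    destruct (pow_lt_1_zero (/ 2) ltac:(rewrite Rabs_pos_eq; lra) _ Hec) as [n Hn].
    exists n; specialize (Hn n (le_n n)).
    rewrite Rabs_pos_eq in Hn by (apply pow_le; lra).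
    apply (Rmult_lt_compat_l c) in Hn; [|lra].
    replace (c * (e / c)) with e in Hn by (field; lra); lra.
Qed.

Lemma le_of_le_half_pow (a b c : R) :
  (forall k, a <= b + c * (/ 2) ^ k) -> a <= b.
Proof.
  intros H; apply Rnot_lt_le; intros Hba.
  destruct (half_pow_small c (a - b)) as [k Hk]; [lra|].
  specialize (H k); lra.
Qed.

Lemma continuity_pt_intro (f : R -> R) (x : R) :
  (forall e, 0 < e -> exists d, 0 < d /\
     forall z, x - d < z < x + d -> f x - e < f z < f x + e) ->
  continuity_pt f x.
Proof.
  intros H e He; destruct (H e He) as [d [Hd Hz]].
  exists d; split; [lra|]; intros z [_ Hzx]; simpl in *; unfold R_dist in *.
  apply Rabs_def2 in Hzx; specialize (Hz z ltac:(lra)); apply Rabs_def1; lra.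
Qed.

Lemma continuity_pt_elim (f : R -> R) (x : R) : continuity_pt f x ->
  forall e, 0 < e -> exists d, 0 < d /\
     forall z, x - d < z < x + d -> f x - e < f z < f x + e.
Proof.
  intros Hf e He; destruct (Hf e He) as [d [Hd Hz]].
  exists d; split; [lra|]; intros z Hzx.
  destruct (Req_dec z x) as [->|Hne]; [lra|].
  assert (Hd' : Rabs (f z - f x) < e).
  { apply (Hz z); split; [split; [exact I|congruence]|].
    simpl; unfold R_dist; apply Rabs_def1; lra. }
  apply Rabs_def2 in Hd'; lra.
Qed.

Definition ivp (f : R -> R) : Prop :=
  forall a b y, a < b -> (f a < y < f b \/ f b < y < f a) ->
    exists x, a <= x <= b /\ f x = y.

Lemma Darboux_ivp (f : R -> R) : Darboux f -> ivp f.
Proof.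
  intros Hf a b y Hab Hy.
  assert (Hab' : is_interval (fun x => a <= x <= b)) by (intros x1 x2 x3; lra).
  assert (Ha : image f (fun x => a <= x <= b) (f a)) by (exists a; split; [lra|easy]).
  assert (Hb : image f (fun x => a <= x <= b) (f b)) by (exists b; split; [lra|easy]).
  destruct Hy as [Hy|Hy].
  - exact (Hf _ Hab' _ _ y Ha Hb ltac:(lra)).
  - exact (Hf _ Hab' _ _ y Hb Ha ltac:(lra)).
Qed.

Lemma ivp_Darboux (f : R -> R) : ivp f -> Darboux f.
Proof.
  intros Hf I HI y1 y2 y [x1 [Hx1 <-]] [x2 [Hx2 <-]] Hy.
  destruct (Req_dec y (f x1)) as [->|Hy1]; [exists x1; easy|].
  destruct (Req_dec y (f x2)) as [->|Hy2]; [exists x2; easy|].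
  destruct (Rtotal_order x1 x2) as [Hlt|[->|Hlt]]; [| lra |].
  - destruct (Hf x1 x2 y Hlt ltac:(lra)) as [x [Hx Hfx]].
    exists x; split; [exact (HI x1 x2 x Hx1 Hx2 Hx)|easy].
  - destruct (Hf x2 x1 y Hlt ltac:(lra)) as [x [Hx Hfx]].
    exists x; split; [exact (HI x2 x1 x Hx2 Hx1 Hx)|easy].
Qed.

Lemma ivp_opp (f : R -> R) : ivp f -> ivp (fun x => - f x).
Proof.
  intros Hf a b y Hab Hy.
  destruct (Hf a b (- y) Hab ltac:(lra)) as [x [Hx Hfx]].
  exists x; split; [easy|lra].
Qed.

Lemma atan_le (x y : R) : x <= y -> atan x <= atan y.
Proof.
  intros [Hlt| ->]; [apply Rlt_le, atan_increasing, Hlt|lra].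
Qed.

Lemma atan_lt_reflect (x y : R) : atan x < atan y -> x < y.
Proof. intros H; apply Rnot_le_lt; intros Hyx; apply atan_le in Hyx; lra. Qed.

Lemma ivp_atan (f : R -> R) : ivp f -> ivp (fun x => atan (f x)).
Proof.
  intros Hf a b y Hab Hy.
  assert (Hya := atan_bound (f a)); assert (Hyb := atan_bound (f b)).
  assert (Hty : atan (tan y) = y) by (apply atan_tan; lra).
  destruct (Hf a b (tan y) Hab) as [x [Hx Hfx]].
  - rewrite <- Hty in Hy.
    destruct Hy as [[H1 H2]|[H1 H2]]; apply atan_lt_reflect in H1, H2; lra.
  - exists x; split; [easy|now rewrite Hfx].
Qed.

Lemma atan_reflects_near (y e : R) : 0 < e ->
  exists tau, 0 < tau /\ forall a,
    (atan y - tau < atan a -> y - e < a) /\ (atan a < atan y + tau -> a < y + e).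
Proof.
  intros He.
  assert (H1 := atan_increasing (y - e) y ltac:(lra)).
  assert (H2 := atan_increasing y (y + e) ltac:(lra)).
  exists (Rmin (atan y - atan (y - e)) (atan (y + e) - atan y)); split; [apply Rmin_pos; lra|].
  assert (H3 := Rmin_l (atan y - atan (y - e)) (atan (y + e) - atan y)).
  assert (H4 := Rmin_r (atan y - atan (y - e)) (atan (y + e) - atan y)).
  intros a; split; intros Ha; apply atan_lt_reflect; lra.
Qed.

(** * Closed sets, gaps and continuity on a closed set *)

Lemma interval_connected (P : R -> Prop) (a b : R) : a <= b -> P a -> ~ P b ->
  (forall x, a <= x <= b -> exists d, 0 < d /\
     forall z, a <= z <= b -> x - d < z < x + d -> (P z <-> P x)) ->
  False.
Proof.
  intros Hab Pa Pb Hloc.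
  set (S w := a <= w <= b /\ forall z, a <= z <= w -> P z).
  assert (Sa : S a) by (split; [lra|intros z Hz; now replace z with a by lra]).
  destruct (completeness S) as [t [Hub Hlub]].
  { exists b; intros w Sw; apply Sw. }
  { now exists a. }
  assert (Hat : a <= t) by now apply Hub.
  assert (Htb : t <= b) by (apply Hlub; intros w Sw; apply Sw).
  assert (Hbelow : forall z, a <= z < t -> P z).
  { intros z Hz; apply NNPP; intros Pz.
    enough (t <= z) by lra.
    apply Hlub; intros w [Hw Sw]; apply Rnot_lt_le; intros Hzw.
    apply Pz, Sw; lra. }
  destruct (Hloc t ltac:(lra)) as [d [Hd Hd']].
  destruct (classic (P t)) as [Pt|Pt].
  - set (w := Rmin (t + d / 2) b).
    assert (Sw : S w).
    { assert (Hw1 : w <= t + d / 2) by apply Rmin_l.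
      assert (Hw2 : w <= b) by apply Rmin_r.
      assert (Hw0 : a <= w) by (apply Rmin_case; lra).
      split; [lra|].
      intros z Hz; destruct (Rlt_le_dec z t) as [Hzt|Htz]; [apply Hbelow; lra|].
      now apply (Hd' z); [lra|lra|]. }
    assert (Hwt := Hub w Sw); unfold w in Hwt; revert Hwt.
    apply Rmin_case; [lra|intros Hbt].
    now replace b with t in Pb by lra.
  - assert (Hat' : a < t) by (destruct Hat as [| <-]; easy).
    set (z := Rmax a (t - d / 2)).
    assert (Hz1 : a <= z) by apply Rmax_l.
    assert (Hz2 : t - d / 2 <= z) by apply Rmax_r.
    assert (Hz3 : z < t) by (apply Rmax_lub_lt; lra).
    apply Pt, (Hd' z); [lra|lra|].
    apply Hbelow; lra.
Qed.

Definition closed_set (C : R -> Prop) : Prop :=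
  forall x, ~ C x -> exists d, 0 < d /\ forall z, x - d < z < x + d -> ~ C z.

Definition free (C : R -> Prop) (u v : R) : Prop := forall z, u < z < v -> ~ C z.

Definition ivp_on_gaps (H : R -> R) (C : R -> Prop) : Prop :=
  forall u v y, u < v -> free C u v -> (H u < y < H v \/ H v < y < H u) ->
    exists x, u <= x <= v /\ H x = y.

Definition continuous_on (H : R -> R) (C : R -> Prop) : Prop :=
  forall x e, C x -> 0 < e -> exists d, 0 < d /\
    forall z, C z -> x - d < z < x + d -> H x - e < H z < H x + e.

Lemma closed_set_reflect (C : R -> Prop) :
  closed_set C -> closed_set (fun x => C (- x)).
Proof.
  intros HC x Cx; destruct (HC (- x) Cx) as [d [Hd Hz]].
  exists d; split; [easy|]; intros z Hzx; apply Hz; lra.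
Qed.

Lemma ivp_on_gaps_opp (H : R -> R) (C : R -> Prop) :
  ivp_on_gaps H C -> ivp_on_gaps (fun x => - H x) C.
Proof.
  intros HG u v y Huv Hf Hy.
  destruct (HG u v (- y) Huv Hf ltac:(lra)) as [x [Hx HHx]].
  exists x; split; [easy|lra].
Qed.

Lemma ivp_on_gaps_reflect (H : R -> R) (C : R -> Prop) :
  ivp_on_gaps H C -> ivp_on_gaps (fun x => H (- x)) (fun x => C (- x)).
Proof.
  intros HG u v y Huv Hf Hy.
  destruct (HG (- v) (- u) y ltac:(lra)) as [x [Hx HHx]].
  - intros z Hz Cz; apply (Hf (- z)); [lra|now rewrite Ropp_involutive].
  - lra.
  - exists (- x); split; [lra|now rewrite Ropp_involutive].
Qed.

Lemma ivp_on_gaps_between (H : R -> R) (C : R -> Prop) (u v s1 s2 y : R) :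
  ivp_on_gaps H C -> free C u v -> u <= s1 <= v -> u <= s2 <= v ->
  H s1 < y < H s2 -> exists x, u <= x <= v /\ H x = y.
Proof.
  intros HG Hf Hs1 Hs2 Hy.
  destruct (Rtotal_order s1 s2) as [Hlt|[->|Hlt]]; [| lra |].
  - destruct (HG s1 s2 y Hlt) as [x [Hx HHx]];
      [intros z Hz; apply Hf; lra|lra|exists x; split; [lra|easy]].
  - destruct (HG s2 s1 y Hlt) as [x [Hx HHx]];
      [intros z Hz; apply Hf; lra|lra|exists x; split; [lra|easy]].
Qed.

Lemma closed_last_point (C : R -> Prop) (t z : R) :
  closed_set C -> C t -> t < z -> ~ C z ->
  exists e, t <= e < z /\ C e /\ free C e z.
Proof.
  intros HC Ct Htz Cz.
  set (E w := t <= w <= z /\ C w).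
  destruct (completeness E) as [e [Hub Hlub]].
  { exists z; intros w Ew; apply Ew. }
  { exists t; split; [lra|easy]. }
  assert (Hte : t <= e) by (apply Hub; split; [lra|easy]).
  assert (Hez : e <= z) by (apply Hlub; intros w Ew; apply Ew).
  assert (Ce : C e).
  { apply NNPP; intros Ce; destruct (HC e Ce) as [d [Hd Hnear]].
    enough (e <= e - d) by lra.
    apply Hlub; intros w [Hw Cw]; apply Rnot_lt_le; intros Hwe.
    assert (w <= e) by (apply Hub; split; easy).
    apply (Hnear w); [lra|easy]. }
  exists e; split; [split; [easy|]|split; [easy|]].
  - destruct Hez as [| ->]; easy.
  - intros w Hw Cw; assert (w <= e) by (apply Hub; split; [lra|easy]); lra.
Qed.

Lemma closed_first_point (C : R -> Prop) (t z : R) :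
  closed_set C -> C t -> z < t -> ~ C z ->
  exists e, z < e <= t /\ C e /\ free C z e.
Proof.
  intros HC Ct Hzt Cz.
  destruct (closed_last_point (fun x => C (- x)) (- t) (- z)) as [e [He [Ce Hf]]];
    [now apply closed_set_reflect|now rewrite Ropp_involutive|lra|now rewrite Ropp_involutive|].
  exists (- e); split; [lra|split; [easy|]].
  intros w Hw Cw; apply (Hf (- w)); [lra|now rewrite Ropp_involutive].
Qed.

Section ContinuousOnCantor.

Variables (H : R -> R) (C : R -> Prop).
Hypotheses (HC : closed_set C) (HG : ivp_on_gaps H C) (Hcont : continuous_on H C).

Lemma sublevel_locally_open (a b y x : R) :
  (forall t, a <= t <= b -> H t <> y) -> a <= x <= b -> H x < y ->
  exists d, 0 < d /\ forall z, a <= z <= b -> x - d < z < x + d -> H z < y.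
Proof.
  intros Hne Hx HHx.
  assert (Hbad : forall u v s0 s, free C u v -> a <= u -> v <= b ->
                   u <= s0 <= v -> u <= s <= v -> H s0 < y -> H s <= y).
  { intros u v s0 s Hf Hu Hv Hs0 Hs HHs0; apply Rnot_lt_le; intros Hys.
    destruct (ivp_on_gaps_between H C u v s0 s y HG Hf Hs0 Hs ltac:(lra)) as [t [Ht HHt]].
    apply (Hne t); [lra|easy]. }
  destruct (classic (C x)) as [Cx|Cx].
  - destruct (Hcont x (y - H x) Cx ltac:(lra)) as [d [Hd Hnear]].
    exists d; split; [easy|]; intros z Hz Hzx.
    destruct (classic (C z)) as [Cz|Cz]; [specialize (Hnear z Cz Hzx); lra|].
    destruct (Rtotal_order x z) as [Hxz|[<-|Hzx']]; [| lra |].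
    + destruct (closed_last_point C x z HC Cx Hxz Cz) as [e [He [Ce Hf]]].
      specialize (Hnear e Ce ltac:(lra)).
      assert (H z <= y) by (apply (Hbad e z e z Hf); lra).
      destruct (Req_dec (H z) y); [exfalso; now apply (Hne z)|lra].
    + destruct (closed_first_point C x z HC Cx Hzx' Cz) as [e [He [Ce Hf]]].
      specialize (Hnear e Ce ltac:(lra)).
      assert (H z <= y) by (apply (Hbad z e e z Hf); lra).
      destruct (Req_dec (H z) y); [exfalso; now apply (Hne z)|lra].
  - destruct (HC x Cx) as [d [Hd Hnear]].
    exists d; split; [easy|]; intros z Hz Hzx.
    assert (H z <= y).
    { apply (Hbad (Rmax a (x - d)) (Rmin b (x + d)) x z).
      - intros w Hw; apply Hnear; split.
        + apply Rle_lt_trans with (2 := proj1 Hw), Rmax_r.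
        + apply Rlt_le_trans with (1 := proj2 Hw), Rmin_r.
      - apply Rmax_l.
      - apply Rmin_l.
      - split; [apply Rmax_lub|apply Rmin_glb]; lra.
      - split; [apply Rmax_lub|apply Rmin_glb]; lra.
      - easy. }
    destruct (Req_dec (H z) y); [exfalso; now apply (Hne z)|lra].
Qed.

End ContinuousOnCantor.

Lemma continuous_on_opp (H : R -> R) (C : R -> Prop) :
  continuous_on H C -> continuous_on (fun x => - H x) C.
Proof.
  intros Hcont x e Cx He; destruct (Hcont x e Cx He) as [d [Hd Hnear]].
  exists d; split; [easy|]; intros z Cz Hz; specialize (Hnear z Cz Hz); lra.
Qed.

Lemma ivp_of_continuous_on (H : R -> R) (C : R -> Prop) :
  closed_set C -> ivp_on_gaps H C -> continuous_on H C -> ivp H.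
Proof.
  intros HC HG Hcont a b y Hab Hy; apply NNPP; intros Hno.
  assert (Hne : forall t, a <= t <= b -> H t <> y) by (intros t Ht E; apply Hno; now exists t).
  assert (Hsign : forall x, a <= x <= b -> exists d, 0 < d /\ forall z, a <= z <= b ->
                    x - d < z < x + d -> (H z < y <-> H x < y)).
  { intros x Hx; destruct (Rlt_le_dec (H x) y) as [Hlt|Hle].
    - destruct (sublevel_locally_open H C HC HG Hcont a b y x Hne Hx Hlt) as [d [Hd Hz]].
      exists d; split; [easy|]; intros z Hzab Hzx; specialize (Hz z Hzab Hzx); tauto.
    - assert (Hne' : forall t, a <= t <= b -> - H t <> - y)
        by (intros t Ht E; apply (Hne t Ht); lra).
      destruct (sublevel_locally_open (fun t => - H t) C HC (ivp_on_gaps_opp H C HG)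
                  (continuous_on_opp H C Hcont) a b (- y) x Hne' Hx) as [d [Hd Hz]].
      { assert (H x <> y) by (apply Hne, Hx); lra. }
      exists d; split; [easy|]; intros z Hzab Hzx; specialize (Hz z Hzab Hzx); split; lra. }
  destruct Hy as [Hy|Hy].
  - apply (interval_connected (fun t => H t < y) a b); [lra|lra|lra|easy].
  - apply (interval_connected (fun t => ~ H t < y) a b); [lra|lra|lra|].
    intros x Hx; destruct (Hsign x Hx) as [d [Hd Hz]].
    exists d; split; [easy|]; intros z Hzab Hzx; specialize (Hz z Hzab Hzx); tauto.
Qed.

(** * Oscillation near a closed set *)

Definition oscillates_near (H : R -> R) (C : R -> Prop) (z1 z2 rho : R) : Prop :=
  forall x u v, C x -> x - rho <= u -> u < v -> v <= x + rho -> free C u v ->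
    (exists s, u < s < v /\ H s < z1) /\ (exists s, u < s < v /\ z2 < H s).

Definition approx_left (H : R -> R) (C : R -> Prop) : Prop :=
  forall x e, C x -> 0 < e ->
    (exists d, 0 < d /\ free C (x - d) x) \/
    (exists s1 s2, x - e < s1 < x /\ x - e < s2 < x /\ ~ C s1 /\ ~ C s2 /\
       H s1 < H x + e /\ H x - e < H s2).

Definition approx_right (H : R -> R) (C : R -> Prop) : Prop :=
  forall x e, C x -> 0 < e ->
    (exists d, 0 < d /\ free C x (x + d)) \/
    (exists s1 s2, x < s1 < x + e /\ x < s2 < x + e /\ ~ C s1 /\ ~ C s2 /\
       H s1 < H x + e /\ H x - e < H s2).

Lemma oscillates_near_opp (H : R -> R) (C : R -> Prop) (z1 z2 rho : R) :
  oscillates_near H C z1 z2 rho -> oscillates_near (fun x => - H x) C (- z2) (- z1) rho.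
Proof.
  intros Hosc x u v Cx Hu Huv Hv Hf.
  destruct (Hosc x u v Cx Hu Huv Hv Hf) as [[s1 [Hs1 H1]] [s2 [Hs2 H2]]].
  split; [exists s2|exists s1]; split; (easy || lra).
Qed.

Lemma oscillates_near_reflect (H : R -> R) (C : R -> Prop) (z1 z2 rho : R) :
  oscillates_near H C z1 z2 rho ->
  oscillates_near (fun x => H (- x)) (fun x => C (- x)) z1 z2 rho.
Proof.
  intros Hosc x u v Cx Hu Huv Hv Hf.
  destruct (Hosc (- x) (- v) (- u) Cx ltac:(lra) ltac:(lra) ltac:(lra))
    as [[s1 [Hs1 H1]] [s2 [Hs2 H2]]].
  { intros z Hz Cz; apply (Hf (- z)); [lra|now rewrite Ropp_involutive]. }
  split; [exists (- s1)|exists (- s2)]; rewrite Ropp_involutive; split; (easy || lra).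
Qed.

Lemma approx_left_opp (H : R -> R) (C : R -> Prop) :
  approx_left H C -> approx_left (fun x => - H x) C.
Proof.
  intros Happ x e Cx He.
  destruct (Happ x e Cx He) as [Hiso|[s1 [s2 (Hs1 & Hs2 & C1 & C2 & H1 & H2)]]];
    [now left|right].
  exists s2, s1; repeat split; (easy || lra).
Qed.

Lemma approx_right_reflect (H : R -> R) (C : R -> Prop) :
  approx_right H C -> approx_left (fun x => H (- x)) (fun x => C (- x)).
Proof.
  intros Happ x e Cx He.
  destruct (Happ (- x) e Cx He) as [[d [Hd Hf]]|[s1 [s2 (Hs1 & Hs2 & C1 & C2 & H1 & H2)]]].
  - left; exists d; split; [easy|]; intros z Hz; apply Hf; lra.
  - right; exists (- s1), (- s2); rewrite !Ropp_involutive; repeat split; (easy || lra).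
Qed.

Section OscillationNearCantor.

Variables (H : R -> R) (C : R -> Prop) (z1 z2 rho : R).
Hypotheses (HC : closed_set C) (HG : ivp_on_gaps H C) (Hrho : 0 < rho)
  (Hosc : oscillates_near H C z1 z2 rho) (Happ : approx_left H C).

(* Just left of [x], [H] drops below [z1] on every gap, while [approx_left] supplies
   a gap point where [H] is still above [y]. *)
Lemma hit_left_of_cantor_point (a x y : R) :
  C x -> z1 < y < H x -> a < x -> exists t, a <= t <= x /\ H t = y.
Proof.
  intros Cx Hy Hax.
  set (m := Rmin (Rmin (H x - y) (x - a)) rho).
  assert (Hm : 0 < m) by (apply Rmin_pos; [apply Rmin_pos|]; lra).
  assert (Hm1 : m <= Rmin (H x - y) (x - a)) by apply Rmin_l.
  assert (Hm2 : m <= rho) by apply Rmin_r.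
  assert (Hm3 := Rmin_l (H x - y) (x - a)); assert (Hm4 := Rmin_r (H x - y) (x - a)).
  destruct (Happ x (m / 2) Cx ltac:(lra)) as [[d [Hd Hf]]|[_ [s2 (_ & Hs2 & _ & Cs2 & _ & HHs2)]]].
  - set (u := x - Rmin (Rmin d rho) (x - a)).
    assert (Hr : 0 < Rmin (Rmin d rho) (x - a)) by (apply Rmin_pos; [apply Rmin_pos|]; lra).
    assert (Hr1 := Rmin_l (Rmin d rho) (x - a)); assert (Hr2 := Rmin_r (Rmin d rho) (x - a)).
    assert (Hr3 := Rmin_l d rho); assert (Hr4 := Rmin_r d rho).
    assert (Hfu : free C u x) by (intros z Hz; apply Hf; unfold u in Hz; lra).
    destruct (Hosc x u x Cx ltac:(unfold u; lra) ltac:(unfold u; lra) ltac:(lra) Hfu)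
      as [[s1 [Hs1 HHs1]] _].
    destruct (ivp_on_gaps_between H C u x s1 x y HG Hfu ltac:(lra) ltac:(unfold u; lra) ltac:(lra))
      as [t [Ht HHt]].
    exists t; split; [unfold u in Ht; lra|easy].
  - destruct (HC s2 Cs2) as [d [Hd Hnear]].
    set (r := Rmin (d / 2) (x - s2)).
    assert (Hr : 0 < r) by (apply Rmin_pos; lra).
    assert (Hr1 : r <= d / 2) by apply Rmin_l; assert (Hr2 : r <= x - s2) by apply Rmin_r.
    assert (Hf : free C (s2 - r) (s2 + r)) by (intros z Hz; apply Hnear; lra).
    destruct (Hosc x (s2 - r) (s2 + r) Cx ltac:(lra) ltac:(lra) ltac:(lra) Hf)
      as [[s1 [Hs1 HHs1]] _].
    destruct (ivp_on_gaps_between H C (s2 - r) (s2 + r) s1 s2 y HG Hf)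
      as [t [Ht HHt]]; [lra|lra|lra|].
    exists t; split; [lra|easy].
Qed.

Lemma hit_or_cantor_point_above (a b y : R) :
  a < b -> H a < y < H b ->
  (exists t, a <= t <= b /\ H t = y) \/ (exists x, C x /\ a < x <= b /\ y < H x).
Proof.
  intros Hab Hy.
  destruct (classic (C b)) as [Cb|Cb]; [right; exists b; split; [easy|lra]|].
  destruct (classic (free C a b)) as [Hf|Hf].
  - left; exact (HG a b y Hab Hf ltac:(lra)).
  - apply not_all_ex_not in Hf as [x0 Hx0].
    apply imply_to_and in Hx0 as [Hx0 Cx0]; apply NNPP in Cx0.
    destruct (closed_last_point C x0 b HC Cx0 ltac:(lra) Cb) as [e [He [Ce Hf]]].
    destruct (Rtotal_order (H e) y) as [Hlt|[Heq|Hgt]].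
    + left; destruct (HG e b y ltac:(lra) Hf ltac:(lra)) as [t [Ht HHt]].
      exists t; split; [lra|easy].
    + left; exists e; split; [lra|easy].
    + right; exists e; split; [easy|split; lra].
Qed.

Lemma ivp_up_above (a b y : R) :
  a < b -> H a < y < H b -> z1 < y -> exists t, a <= t <= b /\ H t = y.
Proof.
  intros Hab Hy Hzy.
  destruct (hit_or_cantor_point_above a b y Hab Hy) as [Hhit|[x (Cx & Hx & HHx)]];
    [easy|].
  destruct (hit_left_of_cantor_point a x y Cx ltac:(lra) ltac:(lra)) as [t [Ht HHt]].
  exists t; split; [lra|easy].
Qed.

End OscillationNearCantor.

Lemma ivp_of_oscillation (H : R -> R) (C : R -> Prop) (z1 z2 rho : R) :
  closed_set C -> ivp_on_gaps H C -> 0 < rho -> z1 < z2 ->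
  oscillates_near H C z1 z2 rho -> approx_left H C -> approx_right H C -> ivp H.
Proof.
  intros HC HG Hrho Hz Hosc HL HR a b y Hab Hy.
  set (Href x := - H (- x)).
  assert (HCr := closed_set_reflect C HC).
  destruct Hy as [Hy|Hy]; destruct (Rlt_le_dec z1 y) as [Hzy|Hyz].
  - exact (ivp_up_above H C z1 z2 rho HC HG Hrho Hosc HL a b y Hab Hy Hzy).
  - destruct (ivp_up_above Href (fun x => C (- x)) (- z2) (- z1) rho HCr
                (ivp_on_gaps_opp _ _ (ivp_on_gaps_reflect H C HG)) Hrho
                (oscillates_near_opp _ _ _ _ _ (oscillates_near_reflect H C z1 z2 rho Hosc))
                (approx_left_opp _ _ (approx_right_reflect H C HR)) (- b) (- a) (- y))
      as [t [Ht HHt]]; unfold Href in *; rewrite ?Ropp_involutive; try lra.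
    exists (- t); split; lra.
  - destruct (ivp_up_above (fun x => H (- x)) (fun x => C (- x)) z1 z2 rho HCr
                (ivp_on_gaps_reflect H C HG) Hrho (oscillates_near_reflect H C z1 z2 rho Hosc)
                (approx_right_reflect H C HR) (- b) (- a) y)
      as [t [Ht HHt]]; rewrite ?Ropp_involutive; try lra.
    exists (- t); split; [lra|easy].
  - destruct (ivp_up_above (fun x => - H x) C (- z2) (- z1) rho HC (ivp_on_gaps_opp H C HG) Hrho
                (oscillates_near_opp H C z1 z2 rho Hosc) (approx_left_opp H C HL) a b (- y))
      as [t [Ht HHt]]; try lra.
    exists t; split; [easy|lra].
Qed.

(** * Cantor sets from splitting schemes *)

Record itv := Itv { lo : R; hi : R }.

Definition in_itv (x : R) (J : itv) : Prop := lo J <= x <= hi J.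

Definition width (J : itv) : R := hi J - lo J.

Definition split_ok (J : itv) (K : itv * itv) : Prop :=
  lo J <= lo (fst K) /\ lo (fst K) < hi (fst K) /\ hi (fst K) < lo (snd K) /\
  lo (snd K) < hi (snd K) /\ hi (snd K) <= hi J /\
  2 * width (fst K) <= width J /\ 2 * width (snd K) <= width J.

Lemma not_in_itv_near (x : R) (J : itv) : ~ in_itv x J ->
  exists d, 0 < d /\ forall z, x - d < z < x + d -> ~ in_itv z J.
Proof.
  unfold in_itv; intros Hx.
  destruct (Rlt_le_dec x (lo J)) as [Hlt|Hle].
  - exists (lo J - x); split; [lra|]; intros z Hz; lra.
  - exists (x - hi J); split; [lra|]; intros z Hz; lra.
Qed.

Fixpoint descend (b : bool) (k : nat) (p : list bool) : list bool :=
  match k with O => p | S k => b :: descend b k p end.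

Lemma descend_length (b : bool) (k : nat) (p : list bool) :
  length (descend b k p) = (k + length p)%nat.
Proof. induction k as [|k IH]; simpl; auto. Qed.

Section CantorTree.

Variables (J0 : itv) (sp : nat -> itv -> itv * itv).
Hypotheses (HJ0 : lo J0 < hi J0) (Hsp : forall n J, lo J < hi J -> split_ok J (sp n J)).

(* The head of [p] is the last choice made: [node (b :: p)] is a child of [node p]. *)
Fixpoint node (p : list bool) : itv :=
  match p with
  | nil => J0
  | b :: q => let K := sp (length q) (node q) in if b then snd K else fst K
  end.

Lemma node_lt (p : list bool) : lo (node p) < hi (node p).
Proof.
  induction p as [|b p IH]; [easy|].
  destruct (Hsp (length p) (node p) IH) as (H1 & H2 & H3 & H4 & H5 & H6 & H7).
  destruct b; simpl; lra.
Qed.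

Lemma node_split (p : list bool) :
  split_ok (node p) (node (false :: p), node (true :: p)).
Proof.
  change (split_ok (node p) (fst (sp (length p) (node p)), snd (sp (length p) (node p)))).
  rewrite <- surjective_pairing; apply Hsp, node_lt.
Qed.

Lemma node_child_bounds (p : list bool) (b : bool) :
  lo (node p) <= lo (node (b :: p)) /\ hi (node (b :: p)) <= hi (node p).
Proof. destruct (node_split p) as (H1 & H2 & H3 & H4 & H5 & _); destruct b; simpl in *; lra. Qed.

Lemma node_gap (p : list bool) : hi (node (false :: p)) < lo (node (true :: p)).
Proof. apply (node_split p). Qed.

Lemma in_node_parent (x : R) (p : list bool) (b : bool) :
  in_itv x (node (b :: p)) -> in_itv x (node p).
Proof. unfold in_itv; destruct (node_child_bounds p b); lra. Qed.

Lemma node_width (p : list bool) : width (node p) <= width J0 * (/ 2) ^ length p.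
Proof.
  induction p as [|b p IH]; [simpl; lra|].
  destruct (node_split p) as (_ & _ & _ & _ & _ & H6 & H7).
  assert (Hw : 2 * width (node (b :: p)) <= width (node p)) by (destruct b; easy).
  simpl length; simpl pow; lra.
Qed.

Lemma node_unique (p q : list bool) (x : R) : length p = length q ->
  in_itv x (node p) -> in_itv x (node q) -> p = q.
Proof.
  revert q; induction p as [|b p IH]; intros [|c q] Hl Hp Hq; try easy.
  injection Hl as Hl.
  assert (Hpq : p = q) by exact (IH q Hl (in_node_parent x p b Hp) (in_node_parent x q c Hq)).
  subst q.
  assert (Hgap := node_gap p); unfold in_itv in *.
  destruct b, c; (easy || lra).
Qed.

Lemma node_isolated (p : list bool) (x : R) : in_itv x (node p) ->
  exists d, 0 < d /\ forall q z, length q = length p -> x - d < z < x + d ->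
    in_itv z (node q) -> q = p.
Proof.
  revert x; induction p as [|b p IH]; intros x Hx.
  - exists 1; split; [lra|]; intros [|c q] z Hq; easy.
  - destruct (IH x (in_node_parent x p b Hx)) as [d0 [Hd0 Hnear0]].
    assert (Hsib : ~ in_itv x (node (negb b :: p))).
    { intros Hx'; assert (Hgap := node_gap p); unfold in_itv in *; destruct b; simpl in *; lra. }
    destruct (not_in_itv_near x _ Hsib) as [d1 [Hd1 Hnear1]].
    exists (Rmin d0 d1); split; [now apply Rmin_pos|].
    assert (H0 := Rmin_l d0 d1); assert (H1 := Rmin_r d0 d1).
    intros [|c q] z Hq Hz Hzq; [easy|]; injection Hq as Hq.
    assert (Hqp : q = p) by (apply (Hnear0 q z Hq); [lra|exact (in_node_parent z q c Hzq)]).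
    subst q.
    destruct (Bool.bool_dec c b) as [->|Hcb]; [easy|].
    exfalso; apply (Hnear1 z); [lra|]; now replace (negb b) with c by (destruct b, c; easy).
Qed.

Definition level (n : nat) (x : R) : Prop :=
  exists p, length p = n /\ in_itv x (node p).

Definition cantor (x : R) : Prop := forall n, level n x.

Lemma level_closed (n : nat) : closed_set (level n).
Proof.
  induction n as [|n IH]; intros x Hx.
  - destruct (not_in_itv_near x J0) as [d [Hd Hnear]].
    { intros Hx0; apply Hx; now exists nil. }
    exists d; split; [easy|]; intros z Hz [[|c q] [Hq Hzq]]; [|easy].
    exact (Hnear z Hz Hzq).
  - destruct (classic (level n x)) as [[p [Hp Hxp]]|Hxn].
    + destruct (node_isolated p x Hxp) as [d0 [Hd0 Hnear0]].
      destruct (not_in_itv_near x (node (false :: p))) as [d1 [Hd1 Hnear1]].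
      { intros Hx1; apply Hx; exists (false :: p); simpl; auto. }
      destruct (not_in_itv_near x (node (true :: p))) as [d2 [Hd2 Hnear2]].
      { intros Hx2; apply Hx; exists (true :: p); simpl; auto. }
      exists (Rmin d0 (Rmin d1 d2)); split; [apply Rmin_pos; [|apply Rmin_pos]; easy|].
      assert (H0 := Rmin_l d0 (Rmin d1 d2)); assert (H12 := Rmin_r d0 (Rmin d1 d2)).
      assert (H1 := Rmin_l d1 d2); assert (H2 := Rmin_r d1 d2).
      intros z Hz [[|c q] [Hq Hzq]]; [easy|]; injection Hq as Hq.
      assert (Hqp : q = p) by (apply (Hnear0 q z); [lia|lra|exact (in_node_parent z q c Hzq)]).
      subst q.
      destruct c; [apply (Hnear2 z)|apply (Hnear1 z)]; (easy || lra).
    + destruct (IH x Hxn) as [d [Hd Hnear]].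
      exists d; split; [easy|]; intros z Hz [[|c q] [Hq Hzq]]; [easy|]; injection Hq as Hq.
      apply (Hnear z Hz); exists q; split; [easy|exact (in_node_parent z q c Hzq)].
Qed.

Lemma cantor_closed : closed_set cantor.
Proof.
  intros x Hx; apply not_all_ex_not in Hx as [n Hn].
  destruct (level_closed n x Hn) as [d [Hd Hnear]].
  exists d; split; [easy|]; intros z Hz Cz; exact (Hnear z Hz (Cz n)).
Qed.

Lemma cantor_child (x : R) (p : list bool) : cantor x -> in_itv x (node p) ->
  exists b, in_itv x (node (b :: p)).
Proof.
  intros Cx Hxp; destruct (Cx (S (length p))) as [[|c q] [Hq Hxq]]; [easy|].
  injection Hq as Hq; exists c.
  now rewrite (node_unique p q x (eq_sym Hq) Hxp (in_node_parent x q c Hxq)).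
Qed.

Lemma cantor_in_root (x : R) : cantor x -> in_itv x J0.
Proof. intros Cx; now destruct (Cx O) as [[|c q] [Hq Hxq]]. Qed.

Lemma node_gap_free (p : list bool) :
  free cantor (hi (node (false :: p))) (lo (node (true :: p))).
Proof.
  intros z Hz Cz.
  assert (Hzp : in_itv z (node p)).
  { destruct (node_split p) as (H1 & H2 & H3 & H4 & H5 & _); unfold in_itv; simpl in *; lra. }
  destruct (cantor_child z p Cz Hzp) as [[|] Hb]; unfold in_itv in Hb; lra.
Qed.

Lemma cantor_lo_isolated (x : R) (p : list bool) : cantor x -> x = lo (node p) ->
  exists d, 0 < d /\ free cantor (x - d) x.
Proof.
  intros Cx Hx.
  assert (Hxp : in_itv x (node p)) by (assert (H := node_lt p); unfold in_itv; lra).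
  destruct (node_isolated p x Hxp) as [d [Hd Hnear]].
  exists d; split; [easy|]; intros z Hz Cz.
  destruct (Cz (length p)) as [q [Hq Hzq]].
  rewrite (Hnear q z Hq ltac:(lra) Hzq) in Hzq; unfold in_itv in Hzq; lra.
Qed.

Lemma cantor_hi_isolated (x : R) (p : list bool) : cantor x -> x = hi (node p) ->
  exists d, 0 < d /\ free cantor x (x + d).
Proof.
  intros Cx Hx.
  assert (Hxp : in_itv x (node p)) by (assert (H := node_lt p); unfold in_itv; lra).
  destruct (node_isolated p x Hxp) as [d [Hd Hnear]].
  exists d; split; [easy|]; intros z Hz Cz.
  destruct (Cz (length p)) as [q [Hq Hzq]].
  rewrite (Hnear q z Hq ltac:(lra) Hzq) in Hzq; unfold in_itv in Hzq; lra.
Qed.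

Lemma node_ancestor (p : list bool) (n : nat) : (n <= length p)%nat ->
  exists q, length q = n /\ forall x, in_itv x (node p) -> in_itv x (node q).
Proof.
  induction p as [|b p IH]; intros Hn.
  - exists nil; simpl in *; split; [lia|easy].
  - destruct (Nat.eq_dec n (length (b :: p))) as [->|Hne]; [now exists (b :: p)|].
    destruct (IH ltac:(simpl in *; lia)) as [q [Hq Hsub]].
    exists q; split; [easy|]; intros x Hx; exact (Hsub x (in_node_parent x p b Hx)).
Qed.

Lemma cantor_of_deep (x : R) :
  (forall n, exists p, (n <= length p)%nat /\ in_itv x (node p)) -> cantor x.
Proof.
  intros Hdeep n; destruct (Hdeep n) as [p [Hn Hxp]].
  destruct (node_ancestor p n Hn) as [q [Hq Hsub]].
  exists q; split; [easy|exact (Hsub x Hxp)].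
Qed.

Lemma node_descend_bounds (b : bool) (i j : nat) (p : list bool) :
  lo (node (descend b j p)) <= lo (node (descend b (i + j) p)) /\
  hi (node (descend b (i + j) p)) <= hi (node (descend b j p)).
Proof.
  induction i as [|i IH]; [simpl; lra|].
  change (descend b (S i + j) p) with (b :: descend b (i + j) p).
  destruct (node_child_bounds (descend b (i + j) p) b); lra.
Qed.

(* The leftmost branch below [p] converges to a point of the Cantor set. *)
Lemma node_has_cantor_point (p : list bool) : exists x, in_itv x (node p) /\ cantor x.
Proof.
  set (E y := exists k, y = lo (node (descend false k p))).
  assert (Hlo_hi : forall j k, lo (node (descend false j p)) <= hi (node (descend false k p))).
  { intros j k; destruct (Nat.le_ge_cases j k) as [Hjk|Hkj].
    - replace k with ((k - j) + j)%nat by lia.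
      destruct (node_descend_bounds false (k - j) j p) as [Hlo Hhi].
      assert (Hlt := node_lt (descend false ((k - j) + j) p)); lra.
    - replace j with ((j - k) + k)%nat by lia.
      destruct (node_descend_bounds false (j - k) k p) as [Hlo Hhi].
      assert (Hlt := node_lt (descend false ((j - k) + k) p)); lra. }
  destruct (completeness E) as [x [Hub Hlub]].
  { exists (hi (node p)); intros y [k ->]; exact (Hlo_hi k O). }
  { exists (lo (node p)), O; easy. }
  assert (Hin : forall k, in_itv x (node (descend false k p))).
  { intros k; split; [apply Hub; now exists k|].
    apply Hlub; intros y [j ->]; apply Hlo_hi. }
  exists x; split; [exact (Hin O)|].
  apply cantor_of_deep; intros n; exists (descend false n p); split; [|apply Hin].
  rewrite descend_length; lia.
Qed.


(* [stair k p x] is [2 ^ -k] times the number of depth-[k] descendants of [node p]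
   whose right end is at most [x]; the Cantor function is their supremum over [k]. *)
Fixpoint stair (k : nat) (p : list bool) (x : R) : R :=
  match k with
  | O => if Rle_dec (hi (node p)) x then 1 else 0
  | S k => (stair k (false :: p) x + stair k (true :: p) x) / 2
  end.

Lemma stair_bounds (k : nat) (p : list bool) (x : R) : 0 <= stair k p x <= 1.
Proof.
  revert p; induction k as [|k IH]; intros p; simpl.
  - destruct Rle_dec; lra.
  - specialize (IH (false :: p)) as H1; specialize (IH (true :: p)) as H2; lra.
Qed.

Lemma stair_left (k : nat) (p : list bool) (x : R) : x < lo (node p) -> stair k p x = 0.
Proof.
  revert p; induction k as [|k IH]; intros p Hx; simpl.
  - destruct Rle_dec; [|easy]; assert (H := node_lt p); lra.
  - destruct (node_child_bounds p false), (node_child_bounds p true).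
    rewrite !IH; lra.
Qed.

Lemma stair_right (k : nat) (p : list bool) (x : R) : hi (node p) <= x -> stair k p x = 1.
Proof.
  revert p; induction k as [|k IH]; intros p Hx; simpl.
  - destruct Rle_dec; [easy|lra].
  - destruct (node_child_bounds p false), (node_child_bounds p true).
    rewrite !IH; lra.
Qed.

Lemma stair_incr (k : nat) (p : list bool) (x : R) : stair k p x <= stair (S k) p x.
Proof.
  revert p; induction k as [|k IH]; intros p.
  - change (stair 1 p x) with ((stair 0 (false :: p) x + stair 0 (true :: p) x) / 2).
    destruct (Rle_dec (hi (node p)) x) as [Hx|Hx].
    + destruct (node_child_bounds p false), (node_child_bounds p true).
      rewrite !stair_right by lra; lra.
    + assert (H1 := stair_bounds 0 (false :: p) x); assert (H2 := stair_bounds 0 (true :: p) x).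
      simpl stair at 1; destruct Rle_dec; [easy|lra].
  - specialize (IH (false :: p)) as H1; specialize (IH (true :: p)) as H2; simpl in *; lra.
Qed.

Lemma stair_incr_le (k m : nat) (p : list bool) (x : R) :
  (k <= m)%nat -> stair k p x <= stair m p x.
Proof. induction 1 as [|m _ IH]; [lra|]; assert (H := stair_incr m p x); lra. Qed.

(* At most one child of [p] straddles [x]; the stairs of the other are all [0] or all [1]. *)
Lemma stair_step (k : nat) (p : list bool) (x : R) :
  stair (S k) p x <= stair k p x + (/ 2) ^ k.
Proof.
  revert p; induction k as [|k IH]; intros p.
  - assert (H1 := stair_bounds 1 p x); assert (H2 := stair_bounds 0 p x); simpl pow; lra.
  - change (stair (S (S k)) p x)
      with ((stair (S k) (false :: p) x + stair (S k) (true :: p) x) / 2).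
    change (stair (S k) p x) with ((stair k (false :: p) x + stair k (true :: p) x) / 2).
    specialize (IH (false :: p)) as H1; specialize (IH (true :: p)) as H2.
    assert (Hgap := node_gap p); simpl pow.
    destruct (Rlt_le_dec x (lo (node (true :: p)))) as [Hx|Hx].
    + rewrite (stair_left (S k) (true :: p)), (stair_left k (true :: p)) by easy; lra.
    + rewrite (stair_right (S k) (false :: p)), (stair_right k (false :: p)) by lra; lra.
Qed.

Lemma stair_far (k j : nat) (p : list bool) (x : R) :
  stair (j + k) p x <= stair k p x + 2 * (/ 2) ^ k - 2 * (/ 2) ^ (j + k).
Proof.
  induction j as [|j IH]; [simpl; lra|].
  assert (H := stair_step (j + k) p x); simpl plus; simpl pow at 2; lra.
Qed.

Lemma stair_mono (k : nat) (p : list bool) (x y : R) : x <= y -> stair k p x <= stair k p y.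
Proof.
  revert p; induction k as [|k IH]; intros p Hxy; simpl.
  - destruct Rle_dec, Rle_dec; lra.
  - assert (H1 := IH (false :: p) Hxy); assert (H2 := IH (true :: p) Hxy); lra.
Qed.

Lemma stair_local (k : nat) (p : list bool) (x : R) :
  exists d, 0 < d /\ forall z, x - d < z < x + d ->
    stair k p x - (/ 2) ^ k <= stair k p z <= stair k p x + (/ 2) ^ k.
Proof.
  revert p x; induction k as [|k IH]; intros p x.
  - exists 1; split; [lra|]; intros z _.
    assert (H1 := stair_bounds 0 p z); assert (H2 := stair_bounds 0 p x); simpl pow; lra.
  - assert (Hgap := node_gap p).
    change (stair (S k) p ?y) with ((stair k (false :: p) y + stair k (true :: p) y) / 2).
    simpl pow.
    destruct (Rlt_le_dec x (lo (node (true :: p)))) as [Hx|Hx].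
    + destruct (IH (false :: p) x) as [d [Hd Hnear]].
      exists (Rmin d (lo (node (true :: p)) - x)); split; [apply Rmin_pos; lra|].
      assert (H1 := Rmin_l d (lo (node (true :: p)) - x)).
      assert (H2 := Rmin_r d (lo (node (true :: p)) - x)).
      intros z Hz; specialize (Hnear z ltac:(lra)).
      rewrite !(stair_left k (true :: p)) by lra; lra.
    + destruct (IH (true :: p) x) as [d [Hd Hnear]].
      exists (Rmin d (x - hi (node (false :: p)))); split; [apply Rmin_pos; lra|].
      assert (H1 := Rmin_l d (x - hi (node (false :: p)))).
      assert (H2 := Rmin_r d (x - hi (node (false :: p)))).
      intros z Hz; specialize (Hnear z ltac:(lra)).
      rewrite !(stair_right k (false :: p)) by lra; lra.
Qed.

Definition indicator (P : Prop) : R := if excluded_middle_informative P then 1 else 0.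

Lemma indicator_children (x : R) (p : list bool) :
  indicator (in_itv x (node (false :: p))) + indicator (in_itv x (node (true :: p)))
  <= indicator (in_itv x (node p)).
Proof.
  assert (Hgap := node_gap p); unfold indicator.
  destruct (excluded_middle_informative (in_itv x (node (false :: p)))) as [H0|H0];
  destruct (excluded_middle_informative (in_itv x (node (true :: p)))) as [H1|H1];
  destruct (excluded_middle_informative (in_itv x (node p))) as [H|H];
  try lra; try (unfold in_itv in *; lra);
  exfalso; apply H; eapply in_node_parent; eassumption.
Qed.

(* A node meeting neither endpoint of a gap cannot lie inside it, since it contains
   points of the Cantor set; hence only nodes containing [l] or [r] make the stair jump. *)
Lemma stair_free (l r : R) (k : nat) (p : list bool) : l < r -> free cantor l r ->
  stair k p r - stair k p l
  <= (indicator (in_itv l (node p)) + indicator (in_itv r (node p))) * (/ 2) ^ k.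
Proof.
  intros Hlr Hf; revert p; induction k as [|k IH]; intros p; simpl pow.
  - rewrite Rmult_1_r; unfold indicator; simpl.
    destruct (excluded_middle_informative (in_itv l (node p))) as [Hl|Hl];
    destruct (excluded_middle_informative (in_itv r (node p))) as [Hr|Hr];
    destruct Rle_dec, Rle_dec; try lra.
    destruct (node_has_cantor_point p) as [x [Hx Cx]].
    assert (Hlt := node_lt p); unfold in_itv in *; exfalso; apply (Hf x); [lra|easy].
  - change (stair (S k) p ?y) with ((stair k (false :: p) y + stair k (true :: p) y) / 2).
    specialize (IH (false :: p)) as H1; specialize (IH (true :: p)) as H2.
    assert (Cl := indicator_children l p); assert (Cr := indicator_children r p).
    assert (Hp := half_pow_pos k).
    apply Rmult_le_compat_r with (r := (/ 2) ^ k) in Cl, Cr; nra.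
Qed.

Definition stair_sup (x : R) : {m | is_lub (fun y => exists k, y = stair k nil x) m}.
Proof.
  apply completeness; [exists 1|exists (stair O nil x), O; easy].
  intros y [k ->]; apply stair_bounds.
Defined.

Definition cantor_fun (x : R) : R := proj1_sig (stair_sup x).

Lemma cantor_fun_ge (k : nat) (x : R) : stair k nil x <= cantor_fun x.
Proof. destruct (proj2_sig (stair_sup x)) as [Hub _]; apply Hub; now exists k. Qed.

Lemma cantor_fun_le (k : nat) (x : R) : cantor_fun x <= stair k nil x + 2 * (/ 2) ^ k.
Proof.
  destruct (proj2_sig (stair_sup x)) as [_ Hlub]; apply Hlub.
  intros y [n ->]; destruct (Nat.le_ge_cases n k) as [Hnk|Hkn].
  - assert (H := stair_incr_le n k nil x Hnk); assert (Hp := half_pow_pos k); lra.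
  - replace n with ((n - k) + k)%nat by lia.
    assert (H := stair_far k (n - k) nil x); assert (Hp := half_pow_pos ((n - k) + k)); lra.
Qed.

Lemma cantor_fun_bounds (x : R) : 0 <= cantor_fun x <= 1.
Proof.
  split.
  - assert (H := cantor_fun_ge O x); assert (H0 := stair_bounds O nil x); lra.
  - apply (le_of_le_half_pow _ _ 2); intros k.
    assert (H := cantor_fun_le k x); assert (H1 := stair_bounds k nil x); lra.
Qed.

Lemma cantor_fun_continuous (x : R) : continuity_pt cantor_fun x.
Proof.
  apply continuity_pt_intro; intros e He.
  destruct (half_pow_small 4 e He) as [k Hk].
  destruct (stair_local k nil x) as [d [Hd Hnear]].
  exists d; split; [easy|]; intros z Hz; specialize (Hnear z Hz).
  assert (H1 := cantor_fun_ge k z); assert (H2 := cantor_fun_le k z).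
  assert (H3 := cantor_fun_ge k x); assert (H4 := cantor_fun_le k x).
  assert (Hp := half_pow_pos k); lra.
Qed.

Lemma cantor_fun_free (l r : R) : l < r -> free cantor l r -> cantor_fun l = cantor_fun r.
Proof.
  intros Hlr Hf; apply Rle_antisym.
  - apply (le_of_le_half_pow _ _ 2); intros k.
    assert (H1 := cantor_fun_le k l); assert (H2 := cantor_fun_ge k r).
    assert (H3 := stair_mono k nil l r (Rlt_le _ _ Hlr)); lra.
  - apply (le_of_le_half_pow _ _ 4); intros k.
    assert (H1 := cantor_fun_le k r); assert (H2 := cantor_fun_ge k l).
    assert (H3 := stair_free l r k nil Hlr Hf).
    assert (Hl : indicator (in_itv l (node nil)) <= 1)
      by (unfold indicator; destruct excluded_middle_informative; lra).
    assert (Hr : indicator (in_itv r (node nil)) <= 1)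
      by (unfold indicator; destruct excluded_middle_informative; lra).
    assert (Hp := half_pow_pos k).
    assert ((indicator (in_itv l (node nil)) + indicator (in_itv r (node nil))) * (/ 2) ^ k
            <= 2 * (/ 2) ^ k) by (apply Rmult_le_compat_r; lra).
    lra.
Qed.

Lemma cantor_fun_left (x : R) : x < lo J0 -> cantor_fun x = 0.
Proof.
  intros Hx; apply Rle_antisym; [|apply cantor_fun_bounds].
  apply (le_of_le_half_pow _ _ 2); intros k.
  assert (H := cantor_fun_le k x); rewrite stair_left in H by easy; lra.
Qed.

Lemma cantor_fun_right (x : R) : hi J0 <= x -> cantor_fun x = 1.
Proof.
  intros Hx; apply Rle_antisym; [apply cantor_fun_bounds|].
  assert (H := cantor_fun_ge O x); rewrite stair_right in H by easy; lra.
Qed.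

End CantorTree.

(** * Oscillation dichotomy and splitting schemes *)

Definition bounded_on (phi : R -> R) (J : itv) (lam mu : R) : Prop :=
  forall s, in_itv s J -> lam <= phi s <= mu.

Definition osc_lt (phi : R -> R) (J : itv) (eta : R) : Prop :=
  forall s t, in_itv s J -> in_itv t J -> phi s - phi t < eta.

Definition calm_subintervals (phi : R -> R) : Prop :=
  forall a b eta, a < b -> 0 < eta ->
    exists J, a <= lo J /\ lo J < hi J /\ hi J <= b /\ osc_lt phi J eta.

Definition dense_oscillation (phi : R -> R) (k1 k2 w1 w2 : R) : Prop :=
  forall u v, k1 <= u -> u < v -> v <= k2 ->
    (exists s, u < s < v /\ phi s < w1) /\ (exists s, u < s < v /\ w2 < phi s).

Lemma bounded_on_shrink (phi : R -> R) (J : itv) (lam mu c : R) :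
  lo J < hi J -> bounded_on phi J lam mu -> 0 < c -> 2 * c < mu - lam ->
  ~ dense_oscillation phi (lo J) (hi J) (lam + c) (mu - c) ->
  exists J' lam' mu', lo J <= lo J' /\ lo J' < hi J' /\ hi J' <= hi J /\
    mu' - lam' = mu - lam - c /\ bounded_on phi J' lam' mu'.
Proof.
  intros HJ Hb Hc Hcm Hnd.
  apply not_all_ex_not in Hnd as [u Hnd]; apply not_all_ex_not in Hnd as [v Hnd].
  apply imply_to_and in Hnd as [Hu Hnd]; apply imply_to_and in Hnd as [Huv Hnd].
  apply imply_to_and in Hnd as [Hv Hnd].
  set (J' := Itv (u + (v - u) / 3) (v - (v - u) / 3)).
  assert (HJ' : forall s, in_itv s J' -> u < s < v /\ in_itv s J)
    by (unfold J', in_itv; simpl; intros s Hs; lra).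
  apply not_and_or in Hnd as [Hlow|Hhigh].
  - exists J', (lam + c), mu; simpl; split; [lra|split; [lra|split; [lra|split; [lra|]]]].
    intros s Hs; destruct (HJ' s Hs) as [Hsuv HsJ]; split; [|apply Hb, HsJ].
    apply Rnot_lt_le; intros Hlt; apply Hlow; now exists s.
  - exists J', lam, (mu - c); simpl; split; [lra|split; [lra|split; [lra|split; [lra|]]]].
    intros s Hs; destruct (HJ' s Hs) as [Hsuv HsJ]; split; [apply Hb, HsJ|].
    apply Rnot_lt_le; intros Hlt; apply Hhigh; now exists s.
Qed.

(* Without dense oscillation, each subinterval of oscillation at least [eta] contains one
   whose range is shorter by [eta / 3]; a bounded range cannot shrink forever. *)
Lemma calm_or_dense_oscillation (phi : R -> R) (K : R) :
  (forall x, - K <= phi x <= K) ->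
  calm_subintervals phi \/
  exists k1 k2 w1 w2, k1 < k2 /\ w1 < w2 /\ dense_oscillation phi k1 k2 w1 w2.
Proof.
  intros Hb; destruct (classic (exists k1 k2 w1 w2, k1 < k2 /\ w1 < w2 /\
                                  dense_oscillation phi k1 k2 w1 w2)) as [Hd|Hnd];
    [now right|left].
  intros a b eta Hab Heta; apply NNPP; intros Hnc.
  assert (Hshrink : forall n, exists J lam mu, a <= lo J /\ lo J < hi J /\ hi J <= b /\
            bounded_on phi J lam mu /\ mu - lam <= 2 * K - INR n * (eta / 3)).
  { induction n as [|n (J & lam & mu & HaJ & HJ & HJb & HbJ & Hlm)].
    - exists (Itv a b), (- K), K; simpl; split; [lra|split; [lra|split; [lra|split]]].
      + intros s _; apply Hb.
      + lra.
    - assert (Hosc : ~ osc_lt phi J eta) by (intros Hosc; apply Hnc; now exists J).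
      apply not_all_ex_not in Hosc as [s Hosc]; apply not_all_ex_not in Hosc as [t Hosc].
      apply imply_to_and in Hosc as [Hs Hosc]; apply imply_to_and in Hosc as [Ht Hst].
      apply Rnot_lt_le in Hst.
      assert (Hs' := HbJ s Hs); assert (Ht' := HbJ t Ht).
      destruct (bounded_on_shrink phi J lam mu (eta / 3) HJ HbJ)
        as (J' & lam' & mu' & H1 & H2 & H3 & H4 & H5); [lra|lra| |].
      + intros Hdense; apply Hnd; exists (lo J), (hi J), (lam + eta / 3), (mu - eta / 3).
        split; [easy|split; [lra|easy]].
      + exists J', lam', mu'; rewrite S_INR.
        split; [lra|split; [easy|split; [lra|split; [easy|lra]]]]. }
  assert (HK : 0 <= K) by (specialize (Hb a); lra).
  destruct (INR_archimed (eta / 3) (2 * K) ltac:(lra)) as [n Hn].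
  destruct (Hshrink n) as (J & lam & mu & _ & HJ & _ & HbJ & Hlm).
  assert (H := HbJ (lo J) ltac:(unfold in_itv; lra)); lra.
Qed.

Lemma ivp_near_inf (phi : R -> R) (K l r tau : R) :
  ivp phi -> (forall x, K <= phi x) -> l < r -> 0 < tau ->
  exists p, l < p < r /\ forall x, l <= x <= r -> phi p < phi x + tau.
Proof.
  intros Hivp Hb Hlr Htau.
  set (E v := exists x, l <= x <= r /\ v = - phi x).
  destruct (completeness E) as [M [Hub Hlub]].
  { exists (- K); intros v [x [_ ->]]; specialize (Hb x); lra. }
  { exists (- phi l), l; split; [lra|easy]. }
  assert (Hinf : forall x, l <= x <= r -> - M <= phi x).
  { intros x Hx; enough (- phi x <= M) by lra; apply Hub; now exists x. }
  assert (Hz : exists z, l <= z <= r /\ phi z < - M + tau / 2).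
  { apply NNPP; intros Hno; enough (M <= M - tau / 2) by lra.
    apply Hlub; intros v [x [Hx ->]]; apply Rnot_lt_le; intros Hlt.
    apply Hno; exists x; split; [easy|lra]. }
  destruct Hz as [z [Hz Hphiz]].
  set (m := (l + r) / 2).
  destruct (Rlt_le_dec (phi m) (- M + tau)) as [Hm|Hm].
  - exists m; split; [unfold m; lra|]; intros x Hx; specialize (Hinf x Hx); lra.
  - assert (Hlevel : forall w, (z <= w <= m \/ m <= w <= z) -> phi w = phi z + tau / 4 ->
              exists p, l < p < r /\ forall x, l <= x <= r -> phi p < phi x + tau).
    { intros w Hw Hphiw; exists w; split.
      - assert (w <> z) by (intros ->; lra); assert (w <> m) by (intros ->; lra).
        unfold m in *; lra.
      - intros x Hx; specialize (Hinf x Hx); lra. }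
    destruct (Rtotal_order z m) as [Hzm|[Hzm|Hzm]]; [| subst; lra |].
    + destruct (Hivp z m (phi z + tau / 4) Hzm ltac:(lra)) as [w [Hw Hphiw]].
      exact (Hlevel w (or_introl Hw) Hphiw).
    + destruct (Hivp m z (phi z + tau / 4) Hzm ltac:(lra)) as [w [Hw Hphiw]].
      exact (Hlevel w (or_intror Hw) Hphiw).
Qed.

Definition extremal_split (phi : R -> R) (eps : R) (J : itv) (K : itv * itv) : Prop :=
  lo (fst K) = lo J /\ hi (snd K) = hi J /\
  exists s1 s2, hi (fst K) < s1 < lo (snd K) /\ hi (fst K) < s2 < lo (snd K) /\
    forall x, in_itv x J -> phi s1 < phi x + eps /\ phi x - eps < phi s2.

Definition calm_split (phi : R -> R) (eps : R) (K : itv * itv) : Prop :=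
  osc_lt phi (fst K) eps /\ osc_lt phi (snd K) eps.

(* The gap is chosen to contain near-minimum and near-maximum points of [phi] on [J];
   the children are the short end pieces of [J] outside them. *)
Lemma extremal_split_exists (phi : R -> R) (K eps : R) (J : itv) :
  ivp phi -> (forall x, - K <= phi x <= K) -> 0 < eps -> lo J < hi J ->
  exists S, split_ok J S /\ extremal_split phi eps J S.
Proof.
  intros Hivp Hb Heps HJ.
  destruct (ivp_near_inf phi (- K) (lo J) (hi J) eps Hivp) as [p1 [Hp1 Hmin]];
    [intros x; apply Hb|easy|easy|].
  destruct (ivp_near_inf (fun x => - phi x) (- K) (lo J) (hi J) eps (ivp_opp phi Hivp))
    as [p2 [Hp2 Hmax]]; [intros x; specialize (Hb x); lra|easy|easy|].
  set (m := Rmin (Rmin (p1 - lo J) (hi J - p1)) (Rmin (p2 - lo J) (hi J - p2))).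
  assert (Hm : 0 < m) by (unfold m; repeat apply Rmin_pos; lra).
  assert (Hm1 : m <= Rmin (p1 - lo J) (hi J - p1)) by apply Rmin_l.
  assert (Hm2 : m <= Rmin (p2 - lo J) (hi J - p2)) by apply Rmin_r.
  assert (Hm3 := Rmin_l (p1 - lo J) (hi J - p1)); assert (Hm4 := Rmin_r (p1 - lo J) (hi J - p1)).
  assert (Hm5 := Rmin_l (p2 - lo J) (hi J - p2)); assert (Hm6 := Rmin_r (p2 - lo J) (hi J - p2)).
  set (h := m / 2).
  exists (Itv (lo J) (lo J + h), Itv (hi J - h) (hi J)).
  unfold split_ok, extremal_split, width; simpl.
  split; [repeat split; unfold h; lra|split; [easy|split; [easy|]]].
  exists p1, p2; split; [unfold h; lra|split; [unfold h; lra|]].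
  intros x Hx; specialize (Hmin x Hx); specialize (Hmax x Hx); split; lra.
Qed.

Lemma calm_split_exists (phi : R -> R) (eps : R) (J : itv) :
  calm_subintervals phi -> 0 < eps -> lo J < hi J ->
  exists S, split_ok J S /\ calm_split phi eps S.
Proof.
  intros Hcalm Heps HJ.
  destruct (Hcalm (lo J) (lo J + width J / 3) eps) as (J1 & H1 & H2 & H3 & H4);
    [unfold width; lra|easy|].
  destruct (Hcalm (hi J - width J / 3) (hi J) eps) as (J2 & G1 & G2 & G3 & G4);
    [unfold width; lra|easy|].
  exists (J1, J2); unfold split_ok, calm_split, width in *; simpl.
  split; [repeat split; lra|easy].
Qed.

Lemma split_function_exists (P : nat -> itv -> itv * itv -> Prop) :
  (forall n J, lo J < hi J -> exists S, split_ok J S /\ P n J S) ->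
  exists sp, forall n J, lo J < hi J -> split_ok J (sp n J) /\ P n J (sp n J).
Proof.
  intros HP.
  destruct (choice (fun (nJ : nat * itv) S =>
              lo (snd nJ) < hi (snd nJ) -> split_ok (snd nJ) S /\ P (fst nJ) (snd nJ) S))
    as [f Hf].
  - intros [n J]; simpl; destruct (Rlt_le_dec (lo J) (hi J)) as [HJ|HJ].
    + destruct (HP n J HJ) as [S HS]; now exists S.
    + exists (J, J); lra.
  - exists (fun n J => f (n, J)); intros n J HJ; exact (Hf (n, J) HJ).
Qed.

(** * The two cases *)

Lemma sum_near_of_atan_near (F g : R -> R) (x e : R) : continuity_pt g x -> 0 < e ->
  exists tau, 0 < tau <= e /\ forall s, x - tau < s < x + tau ->
    (atan (F s) < atan (F x) + tau -> F s + g s < F x + g x + e) /\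
    (atan (F x) - tau < atan (F s) -> F x + g x - e < F s + g s).
Proof.
  intros Hg He.
  destruct (atan_reflects_near (F x) (e / 2)) as [t [Ht Hatan]]; [lra|].
  destruct (continuity_pt_elim g x Hg (e / 2)) as [d [Hd Hgd]]; [lra|].
  set (tau := Rmin (Rmin t d) e).
  assert (Htau : 0 < tau) by (unfold tau; repeat apply Rmin_pos; lra).
  assert (H1 : tau <= Rmin t d) by apply Rmin_l; assert (H2 : tau <= e) by apply Rmin_r.
  assert (H3 := Rmin_l t d); assert (H4 := Rmin_r t d).
  exists tau; split; [lra|]; intros s Hs.
  specialize (Hgd s ltac:(lra)); destruct (Hatan (F s)) as [Hlow Hup].
  split; intros Hs'; [specialize (Hup ltac:(lra))|specialize (Hlow ltac:(lra))]; lra.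
Qed.

Lemma approx_left_transfer (F g : R -> R) (C : R -> Prop) :
  (forall x, continuity_pt g x) -> approx_left (fun x => atan (F x)) C ->
  approx_left (fun x => F x + g x) C.
Proof.
  intros Hg Happ x e Cx He.
  destruct (sum_near_of_atan_near F g x e (Hg x) He) as [tau [Htau Hnear]].
  destruct (Happ x tau Cx ltac:(lra)) as [Hiso|[s1 [s2 (Hs1 & Hs2 & C1 & C2 & H1 & H2)]]];
    [now left|right].
  exists s1, s2; repeat split; try easy; try lra.
  - apply (Hnear s1 ltac:(lra)), H1.
  - apply (Hnear s2 ltac:(lra)), H2.
Qed.

Lemma approx_right_transfer (F g : R -> R) (C : R -> Prop) :
  (forall x, continuity_pt g x) -> approx_right (fun x => atan (F x)) C ->
  approx_right (fun x => F x + g x) C.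
Proof.
  intros Hg Happ x e Cx He.
  destruct (sum_near_of_atan_near F g x e (Hg x) He) as [tau [Htau Hnear]].
  destruct (Happ x tau Cx ltac:(lra)) as [Hiso|[s1 [s2 (Hs1 & Hs2 & C1 & C2 & H1 & H2)]]];
    [now left|right].
  exists s1, s2; repeat split; try easy; try lra.
  - apply (Hnear s1 ltac:(lra)), H1.
  - apply (Hnear s2 ltac:(lra)), H2.
Qed.

Lemma continuous_on_transfer (F g : R -> R) (C : R -> Prop) :
  (forall x, continuity_pt g x) -> continuous_on (fun x => atan (F x)) C ->
  continuous_on (fun x => F x + g x) C.
Proof.
  intros Hg Hcont x e Cx He.
  destruct (sum_near_of_atan_near F g x e (Hg x) He) as [tau [Htau Hnear]].
  destruct (Hcont x tau Cx ltac:(lra)) as [d [Hd Hd']].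
  exists (Rmin d tau); split; [apply Rmin_pos; lra|].
  assert (H1 := Rmin_l d tau); assert (H2 := Rmin_r d tau).
  intros z Cz Hz; specialize (Hd' z Cz ltac:(lra)).
  destruct (Hnear z ltac:(lra)) as [Hup Hlow].
  split; [apply Hlow|apply Hup]; lra.
Qed.

Lemma ivp_on_gaps_add (F g : R -> R) (C : R -> Prop) : ivp F ->
  (forall u v, u < v -> free C u v -> g u = g v) -> ivp_on_gaps (fun x => F x + g x) C.
Proof.
  intros HF Hg u v y Huv Hf Hy.
  assert (Hconst : forall x, u <= x <= v -> g x = g u).
  { intros x Hx; destruct (Req_dec x u) as [->|Hxu]; [easy|].
    symmetry; apply Hg; [lra|]; intros z Hz; apply Hf; lra. }
  destruct (HF u v (y - g u) Huv) as [x [Hx HFx]].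
  { rewrite (Hconst v) in Hy by lra; lra. }
  exists x; split; [easy|rewrite (Hconst x Hx); lra].
Qed.

Section CalmCase.

Variables (F : R -> R) (sp : nat -> itv -> itv * itv).
Hypotheses (HF : ivp F)
  (Hsp : forall n J, lo J < hi J ->
     split_ok J (sp n J) /\ calm_split (fun x => atan (F x)) ((/ 2) ^ n) (sp n J)).

Let J0 := Itv 0 1.
Let HJ0 : lo J0 < hi J0 := Rlt_0_1.
Let Hsplit n J (HJ : lo J < hi J) : split_ok J (sp n J) := proj1 (Hsp n J HJ).

Lemma node_calm (p : list bool) (b : bool) :
  osc_lt (fun x => atan (F x)) (node J0 sp (b :: p)) ((/ 2) ^ length p).
Proof.
  destruct (Hsp (length p) (node J0 sp p) (node_lt J0 sp HJ0 Hsplit p)) as [_ [H0 H1]].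
  now destruct b.
Qed.

Lemma cantor_continuous_atan : continuous_on (fun x => atan (F x)) (cantor J0 sp).
Proof.
  intros x e Cx He; destruct (half_pow_small 1 e He) as [n Hn]; rewrite Rmult_1_l in Hn.
  destruct (Cx (S n)) as [[|b p] [Hlen Hxp]]; [easy|]; injection Hlen as Hlen.
  destruct (node_isolated J0 sp HJ0 Hsplit (b :: p) x Hxp) as [d [Hd Hnear]].
  exists d; split; [easy|]; intros z Cz Hz.
  destruct (Cz (S n)) as [q [Hq Hzq]].
  rewrite (Hnear q z ltac:(simpl; lia) Hz Hzq) in Hzq.
  assert (H1 := node_calm p b z x Hzq Hxp); assert (H2 := node_calm p b x z Hxp Hzq).
  rewrite Hlen in H1, H2; lra.
Qed.

Lemma calm_perturbation : exists g : R -> R,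
  (forall x, continuity_pt g x) /\ (exists a b, g a <> g b) /\ ivp (fun x => F x + g x).
Proof.
  exists (cantor_fun J0 sp); split; [|split].
  - exact (cantor_fun_continuous J0 sp HJ0 Hsplit).
  - exists (-1), 1; rewrite (cantor_fun_left J0 sp HJ0 Hsplit), (cantor_fun_right J0 sp HJ0 Hsplit);
      simpl; lra.
  - apply (ivp_of_continuous_on _ (cantor J0 sp)).
    + exact (cantor_closed J0 sp HJ0 Hsplit).
    + apply ivp_on_gaps_add; [easy|]; intros u v Huv Hf.
      exact (cantor_fun_free J0 sp HJ0 Hsplit u v Huv Hf).
    + apply continuous_on_transfer; [exact (cantor_fun_continuous J0 sp HJ0 Hsplit)|].
      apply cantor_continuous_atan.
Qed.

End CalmCase.

Section DenseCase.

Variables (F : R -> R) (k1 k2 w1 w2 : R) (sp : nat -> itv -> itv * itv).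
Hypotheses (HF : ivp F) (Hk : k1 < k2) (Hw : w1 < w2)
  (Hosc : dense_oscillation (fun x => atan (F x)) k1 k2 w1 w2)
  (Hsp : forall n J, lo J < hi J ->
     split_ok J (sp n J) /\ extremal_split (fun x => atan (F x)) ((/ 2) ^ n) J (sp n J)).

Let rho := (k2 - k1) / 4.
Let J0 := Itv (k1 + rho) (k2 - rho).
Let HJ0 : lo J0 < hi J0.
Proof. unfold J0, rho; simpl; lra. Qed.
Let Hsplit n J (HJ : lo J < hi J) : split_ok J (sp n J) := proj1 (Hsp n J HJ).
Local Notation N := (node J0 sp).
Local Notation C := (cantor J0 sp).

Lemma node_extremal (p : list bool) :
  extremal_split (fun x => atan (F x)) ((/ 2) ^ length p) (N p) (N (false :: p), N (true :: p)).
Proof.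
  change (N (false :: p), N (true :: p))
    with (fst (sp (length p) (N p)), snd (sp (length p) (N p))).
  rewrite <- surjective_pairing; apply Hsp, (node_lt J0 sp HJ0 Hsplit).
Qed.

Lemma descend_false_lo (k : nat) (p : list bool) : lo (N (descend false k p)) = lo (N p).
Proof.
  induction k as [|k IH]; [easy|].
  destruct (node_extremal (descend false k p)) as [E _]; cbn [fst] in E.
  simpl descend; rewrite <- IH; exact E.
Qed.

Lemma descend_true_hi (k : nat) (p : list bool) : hi (N (descend true k p)) = hi (N p).
Proof.
  induction k as [|k IH]; [easy|].
  destruct (node_extremal (descend true k p)) as [_ [E _]]; cbn [snd] in E.
  simpl descend; rewrite <- IH; exact E.
Qed.

Lemma descend_width (b : bool) (k : nat) (p : list bool) :
  width (N (descend b k p)) <= width J0 * (/ 2) ^ k.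
Proof.
  apply Rle_trans with (1 := node_width J0 sp HJ0 Hsplit _).
  apply Rmult_le_compat_l; [unfold width; lra|].
  apply half_pow_le; rewrite descend_length; lia.
Qed.

Lemma cantor_descend_left (x : R) (p0 : list bool) : C x -> in_itv x (N p0) ->
  x = lo (N p0) \/
  exists q, (length p0 <= length q)%nat /\ in_itv x (N q) /\ in_itv x (N (true :: q)).
Proof.
  intros Cx Hx.
  destruct (classic (exists j, in_itv x (N (descend false j p0)) /\
                               ~ in_itv x (N (false :: descend false j p0))))
    as [[j [Hin Hout]]|Hno].
  - right; destruct (cantor_child J0 sp HJ0 Hsplit x _ Cx Hin) as [[|] Hb]; [|easy].
    exists (descend false j p0); rewrite descend_length; split; [lia|easy].
  - left.
    assert (Hall : forall k, in_itv x (N (descend false k p0))).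
    { induction k as [|k IH]; [easy|]; apply NNPP; intros Hk'; apply Hno; now exists k. }
    apply Rle_antisym; [|apply Hx].
    apply (le_of_le_half_pow _ _ (width J0)); intros k.
    specialize (Hall k); assert (Hwk := descend_width false k p0).
    unfold width, in_itv in *; rewrite descend_false_lo in *; lra.
Qed.

Lemma cantor_descend_right (x : R) (p0 : list bool) : C x -> in_itv x (N p0) ->
  x = hi (N p0) \/
  exists q, (length p0 <= length q)%nat /\ in_itv x (N q) /\ in_itv x (N (false :: q)).
Proof.
  intros Cx Hx.
  destruct (classic (exists j, in_itv x (N (descend true j p0)) /\
                               ~ in_itv x (N (true :: descend true j p0))))
    as [[j [Hin Hout]]|Hno].
  - right; destruct (cantor_child J0 sp HJ0 Hsplit x _ Cx Hin) as [[|] Hb]; [easy|].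
    exists (descend true j p0); rewrite descend_length; split; [lia|easy].
  - left.
    assert (Hall : forall k, in_itv x (N (descend true k p0))).
    { induction k as [|k IH]; [easy|]; apply NNPP; intros Hk'; apply Hno; now exists k. }
    apply Rle_antisym; [apply Hx|].
    enough (- x <= - hi (N p0)) by lra.
    apply (le_of_le_half_pow _ _ (width J0)); intros k.
    specialize (Hall k); assert (Hwk := descend_width true k p0).
    unfold width, in_itv in *; rewrite descend_true_hi in *; lra.
Qed.

(* A point of [C] is either a left endpoint of some node, hence isolated from the left,
   or it lies in the right child of an arbitrarily small node, and then the gap of that node
   contains near-extremal points of [atan o F] just to its left. *)
Lemma cantor_approx_left : approx_left (fun x => atan (F x)) C.
Proof.
  intros x e Cx He.
  destruct (half_pow_small (width J0 + 1) e He) as [n Hn].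
  destruct (Cx n) as [p0 [Hlen Hx]].
  destruct (cantor_descend_left x p0 Cx Hx) as [Hlo|[q (Hq & Hxq & Hxt)]].
  - left; exact (cantor_lo_isolated J0 sp HJ0 Hsplit x p0 Cx Hlo).
  - right.
    destruct (node_extremal q) as (_ & _ & s1 & s2 & Hs1 & Hs2 & Hphi); cbn [fst snd] in *.
    destruct (node_split J0 sp HJ0 Hsplit q) as (H1 & H2 & H3 & H4 & H5 & _); cbn [fst snd] in *.
    assert (Hwq := node_width J0 sp HJ0 Hsplit q).
    assert (Hpow := half_pow_le n (length q) ltac:(lia)); assert (Hpos := half_pow_pos n).
    assert (Hw0 : 0 < width J0) by (unfold width; lra).
    assert (Hwn : width (N q) < e) by nra.
    assert (Hpn : (/ 2) ^ length q < e) by nra.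
    destruct (Hphi x Hxq) as [Hp1 Hp2].
    unfold width, in_itv in *.
    exists s1, s2; split; [lra|split; [lra|split; [|split; [|split; lra]]]];
      apply (node_gap_free J0 sp HJ0 Hsplit q); lra.
Qed.

Lemma cantor_approx_right : approx_right (fun x => atan (F x)) C.
Proof.
  intros x e Cx He.
  destruct (half_pow_small (width J0 + 1) e He) as [n Hn].
  destruct (Cx n) as [p0 [Hlen Hx]].
  destruct (cantor_descend_right x p0 Cx Hx) as [Hhi|[q (Hq & Hxq & Hxf)]].
  - left; exact (cantor_hi_isolated J0 sp HJ0 Hsplit x p0 Cx Hhi).
  - right.
    destruct (node_extremal q) as (_ & _ & s1 & s2 & Hs1 & Hs2 & Hphi); cbn [fst snd] in *.
    destruct (node_split J0 sp HJ0 Hsplit q) as (H1 & H2 & H3 & H4 & H5 & _); cbn [fst snd] in *.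
    assert (Hwq := node_width J0 sp HJ0 Hsplit q).
    assert (Hpow := half_pow_le n (length q) ltac:(lia)); assert (Hpos := half_pow_pos n).
    assert (Hw0 : 0 < width J0) by (unfold width; lra).
    assert (Hwn : width (N q) < e) by nra.
    assert (Hpn : (/ 2) ^ length q < e) by nra.
    destruct (Hphi x Hxq) as [Hp1 Hp2].
    unfold width, in_itv in *.
    exists s1, s2; split; [lra|split; [lra|split; [|split; [|split; lra]]]];
      apply (node_gap_free J0 sp HJ0 Hsplit q); lra.
Qed.

(* Taking [theta] half of [tan w2 - tan w1] keeps the level [tan w1 + theta], below which
   [F + g] dips on every gap near [C], under the level [tan w2], which it exceeds there. *)
Lemma dense_perturbation : exists g : R -> R,
  (forall x, continuity_pt g x) /\ (exists a b, g a <> g b) /\ ivp (fun x => F x + g x).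
Proof.
  destruct (Hosc k1 k2 ltac:(lra) Hk ltac:(lra)) as [[s1 [_ Hs1]] [s2 [_ Hs2]]].
  assert (B1 := atan_bound (F s1)); assert (B2 := atan_bound (F s2)).
  assert (Htan : tan w1 < tan w2) by (apply tan_increasing; lra).
  assert (Hatan1 : atan (tan w1) = w1) by (apply atan_tan; lra).
  assert (Hatan2 : atan (tan w2) = w2) by (apply atan_tan; lra).
  set (theta := (tan w2 - tan w1) / 2).
  assert (Htheta : 0 < theta) by (unfold theta; lra).
  set (g x := theta * cantor_fun J0 sp x).
  assert (Hg : forall x, continuity_pt g x).
  { intros x; exact (continuity_pt_scal _ theta x (cantor_fun_continuous J0 sp HJ0 Hsplit x)). }
  assert (Hg01 : forall x, 0 <= g x <= theta).
  { intros x; assert (H := cantor_fun_bounds J0 sp HJ0 Hsplit x); unfold g; nra. }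
  exists g; split; [easy|split].
  - exists (lo J0 - 1), (hi J0); unfold g.
    rewrite (cantor_fun_left J0 sp HJ0 Hsplit), (cantor_fun_right J0 sp HJ0 Hsplit); lra.
  - apply (ivp_of_oscillation _ C (tan w1 + theta) (tan w2) rho).
    + exact (cantor_closed J0 sp HJ0 Hsplit).
    + apply ivp_on_gaps_add; [easy|]; intros u v Huv Hf; unfold g.
      now rewrite (cantor_fun_free J0 sp HJ0 Hsplit u v Huv Hf).
    + unfold rho; lra.
    + unfold theta; lra.
    + intros x u v Cx Hu Huv Hv Hf.
      assert (Hx := cantor_in_root J0 sp x Cx); unfold in_itv, J0 in Hx; simpl in Hx.
      destruct (Hosc u v ltac:(lra) Huv ltac:(lra)) as [[t1 [Ht1 Hlow]] [t2 [Ht2 Hhigh]]].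
      rewrite <- Hatan1 in Hlow; rewrite <- Hatan2 in Hhigh.
      apply atan_lt_reflect in Hlow, Hhigh.
      specialize (Hg01 t1) as G1; specialize (Hg01 t2) as G2.
      split; [exists t1|exists t2]; split; (easy || lra).
    + exact (approx_left_transfer F g C Hg cantor_approx_left).
    + exact (approx_right_transfer F g C Hg cantor_approx_right).
Qed.

End DenseCase.

Theorem mainTheorem1 (F : R -> R) :
  Darboux F ->
  exists g : R -> R,
    (forall x : R, continuity_pt g x) /\
    (exists a b : R, g a <> g b) /\
    Darboux (fun x => F x + g x).
Proof.
  intros HD; assert (HF := Darboux_ivp F HD).
  set (phi x := atan (F x)).
  assert (Hbound : forall x, - (PI / 2) <= phi x <= PI / 2)
    by (intros x; assert (H := atan_bound (F x)); unfold phi; lra).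
  enough (exists g : R -> R, (forall x, continuity_pt g x) /\ (exists a b, g a <> g b) /\
            ivp (fun x => F x + g x)) as (g & Hg & Hnc & Hivp)
    by (exists g; split; [easy|split; [easy|now apply ivp_Darboux]]).
  destruct (calm_or_dense_oscillation phi (PI / 2) Hbound)
    as [Hcalm|(k1 & k2 & w1 & w2 & Hk & Hw & Hosc)].
  - destruct (split_function_exists (fun n _ S => calm_split phi ((/ 2) ^ n) S)) as [sp Hsp].
    { intros n J HJ; exact (calm_split_exists phi _ J Hcalm (half_pow_pos n) HJ). }
    exact (calm_perturbation F sp HF Hsp).
  - destruct (split_function_exists (fun n J S => extremal_split phi ((/ 2) ^ n) J S))
      as [sp Hsp].
    { intros n J HJ.
      exact (extremal_split_exists phi (PI / 2) _ J (ivp_atan F HF) Hbound (half_pow_pos n) HJ). }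
    exact (dense_perturbation F k1 k2 w1 w2 sp HF Hk Hw Hosc Hsp).
Qed.
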